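(* Consider the following chemical reaction network (the ERK cascade with three phosphatases and no feedback) with 22 species RAF, pRAF, MEK, pMEK, ppMEK, ERK, pERK, ppERK, RAS, RAFPH, MEKPH, ERKPH, RAS-RAF, MEK-pRAF, pMEK-pRAF, ERK-ppMEK, pERK-ppMEK, RAF-RAFPH, ppMEK-MEKPH, pMEK-MEKPH, ppERK-ERKPH, pERK-ERKPH (each a separate species; names with a hyphen denote complexes formed by binding) and 30 reactions with rate constants $k_1,\dots,k_{30}$: RAF + RAS $\underset{k_2}{\overset{k_1}{\rightleftarrows}}$ RAS-RAF $\overset{k_3}{\to}$ pRAF + RAS; pRAF + RAFPH $\underset{k_5}{\overset{k_4}{\rightleftarrows}}$ RAF-RAFPH $\overset{k_6}{\to}$ RAF + RAFPH; MEK + pRAF $\underset{k_8}{\overset{k_7}{\rightleftarrows}}$ MEK-pRAF $\overset{k_9}{\to}$ pMEK + pRAF $\underset{k_{11}}{\overset{k_{10}}{\rightleftarrows}}$ pMEK-pRAF $\overset{k_{12}}{\to}$ ppMEK + pRAF; ppMEK + MEKPH $\underset{k_{14}}{\overset{k_{13}}{\rightleftarrows}}$ ppMEK-MEKPH $\overset{k_{15}}{\to}$ pMEK + MEKPH $\underset{k_{17}}{\overset{k_{16}}{\rightleftarrows}}$ pMEK-MEKPH $\overset{k_{18}}{\to}$ MEK + MEKPH; ERK + ppMEK $\underset{k_{20}}{\overset{k_{19}}{\rightleftarrows}}$ ERK-ppMEK $\overset{k_{21}}{\to}$ pERK + ppMEK $\underset{k_{23}}{\overset{k_{22}}{\rightleftarrows}}$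 pERK-ppMEK $\overset{k_{24}}{\to}$ ppERK + ppMEK; ppERK + ERKPH $\underset{k_{26}}{\overset{k_{25}}{\rightleftarrows}}$ ppERK-ERKPH $\overset{k_{27}}{\to}$ pERK + ERKPH $\underset{k_{29}}{\overset{k_{28}}{\rightleftarrows}}$ pERK-ERKPH $\overset{k_{30}}{\to}$ ERK + ERKPH. Then for every choice of positive rate constants $k\in\mathbb{R}^{30}_{>0}$, the associated mass-action system has toric steady states; in particular its steady state ideal is a binomial ideal.
   Context: For a reaction network with species concentrations $x=(x_1,\dots,x_s)$ and reactions $y\to y'$ (complexes $y,y'\in\mathbb{Z}_{\ge0}^s$, where a complex is a formal sum of species) with positive rate constants, the mass-action system is $\dot x = f(x;k)=\sum_{\text{reactions } y\to y'} k_{y\to y'}\, x^{y}(y'-y)$, whose components $f_1,\dots,f_s$ are polynomials in $x$. The steady state ideal is $J=\langle f_1,\dots,f_s\rangle\subseteq\mathbb{R}[x_1,\dots,x_s]$. The system has toric steady states if $J$ can be generated by binomials (polynomials with at most two terms) and $J$ admits nonnegative zeros. *)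

From HB Require Import structures.
From mathcomp Require Import all_boot all_order all_algebra.
From mathcomp Require Import reals.
From mathcomp Require Import mpoly.

Set Implicit Arguments.
Unset Strict Implicit.
Unset Printing Implicit Defensive.

Import Order.TTheory GRing.Theory Num.Theory.
Local Open Scope ring_scope.

(* A complex is a formal sum of species, given as the list of its species
   (with repetition); species are indexed by 'I_s. *)
Definition complex (s : nat) := seq 'I_s.

Definition reaction (s : nat) := (complex s * complex s)%type.

Definition cmono (R : ringType) (s : nat) (y : complex s) : {mpoly R[s]} :=
  \prod_(i <- y) 'X_i.

Definition stoich (s : nat) (r : reaction s) (j : 'I_s) : int :=
  (count_mem j r.2)%:Z - (count_mem j r.1)%:Z.

Definition mass_action (R : ringType) (s m : nat) (net : 'I_m -> reaction s)
    (k : 'I_m -> R) (j : 'I_s) : {mpoly R[s]} :=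
  \sum_(r < m) (k r)%:MP * cmono R (net r).1 * ((stoich (net r) j)%:~R)%:MP.

Definition in_ideal (R : ringType) (s : nat) (G : seq {mpoly R[s]})
    (p : {mpoly R[s]}) : Prop :=
  exists c : 'I_(size G) -> {mpoly R[s]},
    p = \sum_(i < size G) c i * G`_i.

Definition binomial (R : ringType) (s : nat) (p : {mpoly R[s]}) : bool :=
  (size (msupp p) <= 2)%N.

Definition binomial_ideal (R : ringType) (s : nat) (F : seq {mpoly R[s]}) :
    Prop :=
  exists B : seq {mpoly R[s]},
    all (@binomial R s) B /\ forall p, in_ideal B p <-> in_ideal F p.

Definition admits_nonneg_zero (R : realDomainType) (s : nat)
    (F : seq {mpoly R[s]}) : Prop :=
  exists x : 'I_s -> R, (forall i, 0 <= x i) /\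
    forall p, in_ideal F p -> p.@[x] = 0.

Definition steady_state_gens (R : ringType) (s m : nat)
    (net : 'I_m -> reaction s) (k : 'I_m -> R) : seq {mpoly R[s]} :=
  [seq mass_action net k j | j <- enum 'I_s].

Definition has_toric_steady_states (R : realDomainType) (s m : nat)
    (net : 'I_m -> reaction s) (k : 'I_m -> R) : Prop :=
  binomial_ideal (steady_state_gens net k) /\
  admits_nonneg_zero (steady_state_gens net k).

Definition sp (i : nat) : 'I_22 := inord i.

Definition RAF := sp 0.   Definition pRAF := sp 1.   Definition MEK := sp 2.
Definition pMEK := sp 3.  Definition ppMEK := sp 4.  Definition ERK := sp 5.
Definition pERK := sp 6.  Definition ppERK := sp 7.  Definition RAS := sp 8.
Definition RAFPH := sp 9. Definition MEKPH := sp 10. Definition ERKPH := sp 11.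
Definition RAS_RAF := sp 12.     Definition MEK_pRAF := sp 13.
Definition pMEK_pRAF := sp 14.   Definition ERK_ppMEK := sp 15.
Definition pERK_ppMEK := sp 16.  Definition RAF_RAFPH := sp 17.
Definition ppMEK_MEKPH := sp 18. Definition pMEK_MEKPH := sp 19.
Definition ppERK_ERKPH := sp 20. Definition pERK_ERKPH := sp 21.

(* Reactions listed in order of rate constants k_1, ..., k_30
   (index r : 'I_30 corresponds to k_{r+1}). *)
Definition erk_list : seq (reaction 22) :=
  [:: ([:: RAF; RAS], [:: RAS_RAF]);
      ([:: RAS_RAF], [:: RAF; RAS]);
      ([:: RAS_RAF], [:: pRAF; RAS]);
      ([:: pRAF; RAFPH], [:: RAF_RAFPH]);
      ([:: RAF_RAFPH], [:: pRAF; RAFPH]);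
      ([:: RAF_RAFPH], [:: RAF; RAFPH]);
      ([:: MEK; pRAF], [:: MEK_pRAF]);
      ([:: MEK_pRAF], [:: MEK; pRAF]);
      ([:: MEK_pRAF], [:: pMEK; pRAF]);
      ([:: pMEK; pRAF], [:: pMEK_pRAF]);
      ([:: pMEK_pRAF], [:: pMEK; pRAF]);
      ([:: pMEK_pRAF], [:: ppMEK; pRAF]);
      ([:: ppMEK; MEKPH], [:: ppMEK_MEKPH]);
      ([:: ppMEK_MEKPH], [:: ppMEK; MEKPH]);
      ([:: ppMEK_MEKPH], [:: pMEK; MEKPH]);
      ([:: pMEK; MEKPH], [:: pMEK_MEKPH]);
      ([:: pMEK_MEKPH], [:: pMEK; MEKPH]);
      ([:: pMEK_MEKPH], [:: MEK; MEKPH]);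
      ([:: ERK; ppMEK], [:: ERK_ppMEK]);
      ([:: ERK_ppMEK], [:: ERK; ppMEK]);
      ([:: ERK_ppMEK], [:: pERK; ppMEK]);
      ([:: pERK; ppMEK], [:: pERK_ppMEK]);
      ([:: pERK_ppMEK], [:: pERK; ppMEK]);
      ([:: pERK_ppMEK], [:: ppERK; ppMEK]);
      ([:: ppERK; ERKPH], [:: ppERK_ERKPH]);
      ([:: ppERK_ERKPH], [:: ppERK; ERKPH]);
      ([:: ppERK_ERKPH], [:: pERK; ERKPH]);
      ([:: pERK; ERKPH], [:: pERK_ERKPH]);
      ([:: pERK_ERKPH], [:: pERK; ERKPH]);
      ([:: pERK_ERKPH], [:: ERK; ERKPH])
  ].

Definition erk_net (r : 'I_30) : reaction 22 := nth ([::], [::]) erk_list r.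

(* The steady-state ideal is generated by 15 binomials.  The 30 reactions form
   ten enzyme units A + E <=> C -> B + E, and the contribution of one unit to
   the vector field is  (a x_A x_E - (b + c) x_C) (e_C - e_A - e_E) + c x_C (e_B - e_A).
   The ten units pair up into five futile cycles A -> B -> A, so the whole
   field is an integer combination of the ten complex-formation binomials and
   of the five differences  c x_C - c' x_C'  of catalytic fluxes of a cycle.
   Conversely each of these 15 binomials is an integer combination of the f_j,
   which is a finite computation with the stoichiometric coefficients.  The
   origin is a nonnegative zero because every reaction has a nonempty reactant. *)

From Pilot Require Import Defs.
From HB Require Import structures.
From mathcomp Require Import all_boot all_order all_algebra.
From mathcomp Require Import reals.
From mathcomp Require Import mpoly.
From mathcomp Require Import ring.
Import Order.TTheory GRing.Theory Num.Theory.
Local Open Scope ring_scope.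

Set Implicit Arguments.
Unset Strict Implicit.
Unset Printing Implicit Defensive.

Section Ideals.
Variables (R : nzRingType) (n : nat).
Implicit Types (G H : seq {mpoly R[n]}) (p q : {mpoly R[n]}).

Lemma mem_in_ideal G p : p \in G -> in_ideal G p.
Proof.
move=> pG; have ltpG : (index p G < size G)%N by rewrite index_mem.
exists (fun j : 'I_(size G) => (nat_of_ord j == index p G)%:R).
rewrite (bigD1 (Ordinal ltpG)) //= eqxx mul1r nth_index // big1 ?addr0 // => j neq_j.
by rewrite -(inj_eq val_inj) /= in neq_j; rewrite (negPf neq_j) mul0r.
Qed.

Lemma in_ideal0 G : in_ideal G 0.
Proof. by exists (fun=> 0); rewrite big1 // => j _; rewrite mul0r. Qed.

Lemma in_idealD G p q : in_ideal G p -> in_ideal G q -> in_ideal G (p + q).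
Proof.
move=> [c ->] [d ->]; exists (fun j => c j + d j).
by rewrite -big_split; apply: eq_bigr => j _; rewrite mulrDl.
Qed.

Lemma in_idealMl G r p : in_ideal G p -> in_ideal G (r * p).
Proof.
move=> [c ->]; exists (fun j => r * c j).
by rewrite mulr_sumr; apply: eq_bigr => j _; rewrite mulrA.
Qed.

Lemma in_ideal_sum G I (r : seq I) (P : pred I) (F : I -> {mpoly R[n]}) :
  (forall i, P i -> in_ideal G (F i)) -> in_ideal G (\sum_(i <- r | P i) F i).
Proof. exact: (big_ind (in_ideal G) (in_ideal0 G) (@in_idealD G)). Qed.

Lemma in_ideal_trans G H p :
  (forall q, q \in G -> in_ideal H q) -> in_ideal G p -> in_ideal H p.
Proof.
move=> GH [c ->]; apply: in_ideal_sum => i _.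
exact/in_idealMl/GH/mem_nth.
Qed.

End Ideals.

Lemma in_ideal_meval (R : comNzRingType) n (G : seq {mpoly R[n]}) (x : 'I_n -> R) p :
  (forall q, q \in G -> q.@[x] = 0) -> in_ideal G p -> p.@[x] = 0.
Proof.
move=> G0 [c ->]; rewrite rmorph_sum big1 // => i _.
by rewrite rmorphM /= (G0 G`_i) ?mulr0 // mem_nth.
Qed.

Lemma in_ideal_left_inverse (R : comNzRingType) n m (G : seq {mpoly R[n]})
    (F : 'I_m -> {mpoly R[n]}) (W : nat -> 'I_m -> int) (V : seq (int * 'I_m)) i0 :
  (forall j, F j = \sum_(0 <= i < size G) G`_i * ((W i j)%:~R)%:MP) ->
  (forall i, (i < size G)%N -> \sum_(vj <- V) vj.1 * W i vj.2 = (i == i0)%:R) ->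
  (i0 < size G)%N -> in_ideal [seq F j | j <- enum 'I_m] G`_i0.
Proof.
move=> decF leftinv lti0.
suff -> : G`_i0 = \sum_(vj <- V) (vj.1%:~R)%:MP * F vj.2.
  by apply: in_ideal_sum => vj _; apply/in_idealMl/mem_in_ideal/map_f/mem_enum.
transitivity (\sum_(0 <= i < size G) G`_i * (((\sum_(vj <- V) vj.1 * W i vj.2)%:~R : R)%:MP)).
  rewrite (bigD1_seq i0) ?mem_index_iota ?iota_uniq //= leftinv // eqxx mulr1.
  rewrite big1_seq ?addr0 // => i /andP[neq_i0]; rewrite mem_index_iota => /andP[_ lti].
  by rewrite leftinv // (negPf neq_i0) mulr0.
under [RHS]eq_bigr do rewrite decF mulr_sumr.
rewrite exchange_big; apply: eq_bigr => i _.
rewrite rmorph_sum raddf_sum mulr_sumr; apply: eq_bigr => vj _.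
by rewrite /= intrM mpolyCM mulrCA.
Qed.

Definition mono_diff (R : nzRingType) s (a : R) (y : complex s) (b : R) (y' : complex s) :
  {mpoly R[s]} := a%:MP * cmono R y - b%:MP * cmono R y'.

Lemma cmonoE (R : nzRingType) s (y : complex s) : cmono R y = 'X_[\sum_(i <- y) U_(i)].
Proof. by rewrite (big_morph _ (@mpolyXD s R) (mpolyX0 s R)). Qed.

Lemma binomial_mono_diff (R : nzRingType) s (a b : R) (y y' : complex s) :
  Defs.binomial (mono_diff a y b y').
Proof.
rewrite /Defs.binomial /mono_diff !cmonoE !mul_mpolyC.
set m := (\sum_(i <- y) _)%MM; set m' := (\sum_(i <- y') _)%MM.
apply: (leq_trans (uniq_leq_size (msupp_uniq _) (_ : {subset _ <= [:: m; m']}))) => //.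
move=> x /msuppB_le; rewrite mem_cat.
by case/orP=> /msuppZ_le; rewrite msuppX !inE => ->; rewrite ?orbT.
Qed.

Lemma mass_action_eval0 (R : comNzRingType) s m (net : 'I_m -> reaction s)
    (k : 'I_m -> R) j :
  (forall r, (net r).1 != [::]) -> (mass_action net k j).@[fun=> 0] = 0.
Proof.
move=> reactant_nonempty; rewrite /mass_action rmorph_sum big1 // => r _.
have := reactant_nonempty r; rewrite !rmorphM /= /cmono rmorph_prod.
by case: (net r).1 => [//|i y] _; rewrite big_cons /= mevalXU mul0r mulr0 mul0r.
Qed.

Section EnzymeUnits.
Variables (R : comNzRingType) (s : nat).
Implicit Types (a b c : R) (y : complex s) (A E C B j : 'I_s).

Local Notation stoichP r j := (((stoich r j)%:~R : R)%:MP : {mpoly R[s]}).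

Definition reaction_field a (r : reaction s) j : {mpoly R[s]} :=
  a%:MP * cmono R r.1 * stoichP r j.

Lemma mass_actionE m (net : 'I_m -> reaction s) (k : 'I_m -> R) j :
  mass_action net k j = \sum_(r < m) reaction_field (k r) (net r) j.
Proof. by []. Qed.

Lemma stoichN y (y' : complex s) j : stoich (y', y) j = - stoich (y, y') j.
Proof. by rewrite /stoich opprB. Qed.

Lemma stoich_enzyme A E C B j :
  stoich ([:: C], [:: B; E]) j = stoich ([:: C], [:: A; E]) j + stoich ([:: A], [:: B]) j.
Proof. rewrite /stoich /= !PoszD; ring. Qed.

Definition enzyme_unit (u : 'I_s * 'I_s * 'I_s * 'I_s) : seq (reaction s) :=
  let: (A, E, C, B) := u in
  [:: ([:: A; E], [:: C]); ([:: C], [:: A; E]); ([:: C], [:: B; E])].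

Definition unit_field a b c (u : 'I_s * 'I_s * 'I_s * 'I_s) j : {mpoly R[s]} :=
  let: (A, E, C, B) := u in
  mono_diff a [:: A; E] (b + c) [:: C] * stoichP ([:: A; E], [:: C]) j +
  c%:MP * cmono R [:: C] * stoichP ([:: A], [:: B]) j.

Lemma enzyme_unit_field a b c A E C B j :
  reaction_field a ([:: A; E], [:: C]) j + reaction_field b ([:: C], [:: A; E]) j +
  reaction_field c ([:: C], [:: B; E]) j = unit_field a b c (A, E, C, B) j.
Proof.
rewrite /reaction_field /unit_field /mono_diff (stoich_enzyme A E C B) (stoichN [:: A; E] [:: C]).
rewrite intrD intrN !mpolyCD mpolyCN; ring.
Qed.

Lemma sum_enzyme_units (K : nat -> R) us d j :
  \sum_(0 <= r < 3 * size us)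
     reaction_field (K r) (nth ([::], [::]) (flatten [seq enzyme_unit u | u <- us]) r) j =
  \sum_(0 <= i < size us) unit_field (K (3 * i)%N) (K (3 * i).+1) (K (3 * i).+2) (nth d us i) j.
Proof.
elim: us K => [|[[[A E] C] B] us IH] K; first by rewrite !big_geq.
rewrite [size _]/= mulnS -[(3 + _)%N]/((3 * size us).+3).
rewrite !big_nat_recl // !addrA enzyme_unit_field (IH (fun i => K i.+3)).
by congr (_ + _); apply: eq_big_nat => i _; rewrite mulnS.
Qed.

End EnzymeUnits.

Lemma sum_ord_inord (M : nmodType) n (F : 'I_n.+1 -> M) :
  \sum_(r < n.+1) F r = \sum_(0 <= i < n.+1) F (inord i).
Proof. by rewrite big_mkord; apply: eq_bigr => r _; rewrite inord_val. Qed.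

Lemma inord_inZp n i : (i <= n)%N -> inord i = inZp i :> 'I_n.+1.
Proof. by move=> lein; apply: val_inj; rewrite /= inordK // modn_small. Qed.

Lemma erk_netE i : (i < 30)%N -> erk_net (inord i) = nth ([::], [::]) erk_list i.
Proof. by move=> lti; rewrite /erk_net inordK. Qed.

Definition erk_units : seq ('I_22 * 'I_22 * 'I_22 * 'I_22) :=
  [:: (RAF, RAS, RAS_RAF, pRAF); (pRAF, RAFPH, RAF_RAFPH, RAF);
      (MEK, pRAF, MEK_pRAF, pMEK); (pMEK, pRAF, pMEK_pRAF, ppMEK);
      (ppMEK, MEKPH, ppMEK_MEKPH, pMEK); (pMEK, MEKPH, pMEK_MEKPH, MEK);
      (ERK, ppMEK, ERK_ppMEK, pERK); (pERK, ppMEK, pERK_ppMEK, ppERK);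
      (ppERK, ERKPH, ppERK_ERKPH, pERK); (pERK, ERKPH, pERK_ERKPH, ERK)].

Lemma erk_listE : erk_list = flatten [seq enzyme_unit u | u <- erk_units].
Proof. by []. Qed.

Definition erk_directions : seq (reaction 22) :=
  [:: ([:: RAF; RAS], [:: RAS_RAF]);       ([:: pRAF; RAFPH], [:: RAF_RAFPH]);
      ([:: MEK; pRAF], [:: MEK_pRAF]);     ([:: pMEK; pRAF], [:: pMEK_pRAF]);
      ([:: ppMEK; MEKPH], [:: ppMEK_MEKPH]); ([:: pMEK; MEKPH], [:: pMEK_MEKPH]);
      ([:: ERK; ppMEK], [:: ERK_ppMEK]);   ([:: pERK; ppMEK], [:: pERK_ppMEK]);
      ([:: ppERK; ERKPH], [:: ppERK_ERKPH]); ([:: pERK; ERKPH], [:: pERK_ERKPH]);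
      ([:: RAF], [:: pRAF]); ([:: MEK], [:: pMEK]); ([:: pMEK], [:: ppMEK]);
      ([:: ERK], [:: pERK]); ([:: pERK], [:: ppERK])].

Definition erk_binomials (R : comNzRingType) (k : 'I_30 -> R) : seq {mpoly R[22]} :=
  let K i := k (inord i) in
  [:: mono_diff (K 0) [:: RAF; RAS] (K 1 + K 2%N) [:: RAS_RAF];
      mono_diff (K 3%N) [:: pRAF; RAFPH] (K 4%N + K 5%N) [:: RAF_RAFPH];
      mono_diff (K 6%N) [:: MEK; pRAF] (K 7%N + K 8%N) [:: MEK_pRAF];
      mono_diff (K 9%N) [:: pMEK; pRAF] (K 10%N + K 11%N) [:: pMEK_pRAF];
      mono_diff (K 12%N) [:: ppMEK; MEKPH] (K 13%N + K 14%N) [:: ppMEK_MEKPH];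
      mono_diff (K 15%N) [:: pMEK; MEKPH] (K 16%N + K 17%N) [:: pMEK_MEKPH];
      mono_diff (K 18%N) [:: ERK; ppMEK] (K 19%N + K 20%N) [:: ERK_ppMEK];
      mono_diff (K 21%N) [:: pERK; ppMEK] (K 22%N + K 23%N) [:: pERK_ppMEK];
      mono_diff (K 24%N) [:: ppERK; ERKPH] (K 25%N + K 26%N) [:: ppERK_ERKPH];
      mono_diff (K 27%N) [:: pERK; ERKPH] (K 28%N + K 29%N) [:: pERK_ERKPH];
      mono_diff (K 2%N) [:: RAS_RAF] (K 5%N) [:: RAF_RAFPH];
      mono_diff (K 8%N) [:: MEK_pRAF] (K 17%N) [:: pMEK_MEKPH];
      mono_diff (K 11%N) [:: pMEK_pRAF] (K 14%N) [:: ppMEK_MEKPH];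
      mono_diff (K 20%N) [:: ERK_ppMEK] (K 29%N) [:: pERK_ERKPH];
      mono_diff (K 23%N) [:: pERK_ppMEK] (K 26%N) [:: ppERK_ERKPH]].

Lemma erk_mass_action_decomposition (R : comNzRingType) (k : 'I_30 -> R) j :
  mass_action erk_net k j = \sum_(0 <= i < 15)
    (erk_binomials k)`_i * ((stoich (nth ([::], [::]) erk_directions i) j)%:~R)%:MP.
Proof.
rewrite mass_actionE sum_ord_inord.
under eq_big_nat => i /andP[_ lti] do rewrite erk_netE //.
rewrite erk_listE -[30%N]/(3 * size erk_units)%N.
rewrite (sum_enzyme_units (fun i => k (inord i)) _ (RAF, RAF, RAF, RAF)).
rewrite /index_iota /= !big_cons !big_nil /unit_field /muln /=.
(* Orient the two catalytic steps of each futile cycle the same way. *)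
rewrite (stoichN [:: RAF] [:: pRAF]) (stoichN [:: MEK] [:: pMEK]) (stoichN [:: pMEK] [:: ppMEK]).
rewrite (stoichN [:: ERK] [:: pERK]) (stoichN [:: pERK] [:: ppERK]).
rewrite /mono_diff !intrN !mpolyCN !mpolyCD.
ring.
Qed.

(* Row i lists the coefficients expressing the i-th binomial through the f_j. *)
Definition erk_combinations : seq (seq (int * 'I_22)) :=
  [:: [:: (1, RAS_RAF)]; [:: (1, RAF_RAFPH)]; [:: (1, MEK_pRAF)]; [:: (1, pMEK_pRAF)];
      [:: (1, ppMEK_MEKPH)]; [:: (1, pMEK_MEKPH)]; [:: (1, ERK_ppMEK)];
      [:: (1, pERK_ppMEK)]; [:: (1, ppERK_ERKPH)]; [:: (1, pERK_ERKPH)];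
      [:: (-1, RAF); (-1, RAS_RAF)]; [:: (-1, MEK); (-1, MEK_pRAF)];
      [:: (1, ppMEK); (1, ppMEK_MEKPH); (1, ERK_ppMEK); (1, pERK_ppMEK)];
      [:: (-1, ERK); (-1, ERK_ppMEK)]; [:: (1, ppERK); (1, ppERK_ERKPH)]].

Lemma erk_combinations_left_inverse i0 i : (i0 < 15)%N -> (i < 15)%N ->
  \sum_(vj <- nth [::] erk_combinations i0)
     vj.1 * stoich (nth ([::], [::]) erk_directions i) vj.2 = (i == i0)%:R.
Proof.
move=> lti0 lti; apply/eqP.
have table : all (fun i0 => all (fun i =>
    \sum_(vj <- nth [::] erk_combinations i0)
       vj.1 * stoich (nth ([::], [::]) erk_directions i) vj.2 == (i == i0)%:R)
    (iota 0 15)) (iota 0 15).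
  (* [inord] decides its bound with the opaque [idP]; [inZp] computes. *)
  rewrite /erk_combinations /erk_directions /RAF /pRAF /MEK /pMEK /ppMEK /ERK /pERK
    /ppERK /RAS /RAFPH /MEKPH /ERKPH /RAS_RAF /MEK_pRAF /pMEK_pRAF /ERK_ppMEK
    /pERK_ppMEK /RAF_RAFPH /ppMEK_MEKPH /pMEK_MEKPH /ppERK_ERKPH /pERK_ERKPH /sp.
  by rewrite !inord_inZp // unlock.
move: table => /allP/(_ i0); rewrite mem_iota lti0 => /(_ isT).
by move=> /allP/(_ i); rewrite mem_iota lti => /(_ isT).
Qed.

Theorem mainTheorem1 (R : realType) (k : 'I_30 -> R) (hk : forall r, 0 < k r) :
  has_toric_steady_states erk_net k.
Proof.
split.
  exists (erk_binomials k); split; first by rewrite /= !binomial_mono_diff.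
  move=> p; split; apply: in_ideal_trans => q.
    case/(nthP 0) => i lti <-.
    apply: (in_ideal_left_inverse (V := nth [::] erk_combinations i)) => //.
    - exact: erk_mass_action_decomposition.
    - by move=> i' lti'; apply: erk_combinations_left_inverse.
  case/mapP => j _ ->; rewrite erk_mass_action_decomposition big_seq.
  apply: in_ideal_sum => i; rewrite mem_index_iota => /andP[_ lti].
  by rewrite mulrC; apply/in_idealMl/mem_in_ideal/mem_nth.
exists (fun=> 0); split=> // p; apply: in_ideal_meval => _ /mapP[j _ ->].
apply: mass_action_eval0 => r.
have : all (fun rx : reaction 22 => rx.1 != [::]) erk_list by [].
by move/all_nthP; apply; apply: ltn_ord.
Qed.
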